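(* Let $n,d,t,a$ be integers with $3\le d\le n-2$, $2\le t\le d-1$ and $1\le a\le n-d-2$. Then $m_{G_{n,d,t,a}}[n-d+2,n]=n-d$.
   Context: For a graph $G$ of order $n$, the Laplacian eigenvalues are the eigenvalues of $L(G)=D(G)-A(G)$, and for an interval $I\subseteq[0,n]$, $m_G I$ is the number of Laplacian eigenvalues of $G$ (with multiplicity) in $I$. $G_{n,d,t,a}$ is the graph obtained from a path $v_1v_2\dots v_{d+1}$ and a vertex-disjoint complete graph $K_{n-d-1}$ by adding all edges between every vertex of $K_{n-d-1}$ and each of $v_t,v_{t+1}$, all edges between $v_{t-1}$ and a fixed set of $a$ vertices of $K_{n-d-1}$, and all edges between $v_{t+2}$ and each of the remaining $n-d-1-a$ vertices of $K_{n-d-1}$. *)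

From HB Require Import structures.
From mathcomp Require Import all_boot all_order all_algebra all_field.
Set Implicit Arguments. Unset Strict Implicit. Unset Printing Implicit Defensive.
Import Order.TTheory GRing.Theory Num.Theory.

(* Index k (0 <= k <= d) is the path
   vertex v_{k+1}; indices d+1 .. n-1 form K_{n-d-1}.  The fixed set of
   a clique vertices adjacent to v_{t-1} is {d+1, ..., d+a}. *)
Definition Gedge (d t a i j : nat) : bool :=
  [|| (j == i.+1) && (j <= d)
    , [&& d < i, d < j & i != j]
    , (d < j) && ((i == t.-1) || (i == t))              (* K -- v_t, v_{t+1} *)
    , [&& d < j, j <= d + a & i == t - 2]               (* a vertices -- v_{t-1} *)
    | (d + a < j) && (i == t.+1) ].                     (* rest -- v_{t+2} *)

Definition Gadj (d t a : nat) (i j : nat) : bool := Gedge d t a i j || Gedge d t a j i.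

Definition Gdeg (n d t a : nat) (i : 'I_n) : nat :=
  #|[set j : 'I_n | Gadj d t a i j]|.

Definition Glap (n d t a : nat) : 'M[algC]_n :=
  (\matrix_(i, j) (if i == j then (Gdeg d t a i)%:R
                  else - (Gadj d t a i j)%:R))%R.

Definition is_spectrum (n : nat) (M : 'M[algC]_n) (s : seq algC) : Prop :=
  char_poly M = (\prod_(x <- s) ('X - x%:P))%R.

Definition count_in (lo hi : algC) (s : seq algC) : nat :=
  count (fun x => (lo <= x) && (x <= hi))%R s.

(* The Laplacian L of G = G_{n,d,t,a} is Hermitian, so its eigenvalues are counted by
   the Courant-Fischer principle: if u^* L u >= c |u|^2 on a subspace of dimension p and
   u^* L u < c |u|^2 on the nonzero vectors of a subspace of dimension n - p, exactly p
   eigenvalues are >= c.  Put K = n - d and c = K + 2, and let S = {v_t, v_(t+1)} together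
   with the K - 1 clique vertices: S is a clique on K + 1 vertices, each with exactly one
   neighbour outside S.
   - On the K-dimensional space of vectors supported on S with zero sum, the Laplacian
     energy \sum_{ij} |u_i - u_j|^2 is at least 2 (|S| + 1) |u|^2 = 2 c |u|^2.
   - On the d-dimensional space of vectors constant on S, each edge satisfies
     K |u_i - u_j|^2 <= w_ij |u_i|^2 + w_ji |u_j|^2 for weights w depending only on whether
     i, j lie in S, and every weighted degree \sum_j w_ij is below K (K + 2); summing gives
     energy < 2 c |u|^2.
   Finally u^* L u <= n |u|^2 always, so the n - d eigenvalues >= c all lie in [c, n]. *)

From mathcomp Require Import all_boot all_order all_algebra all_field.
From mathcomp Require Import zify ring.
Import Order.TTheory GRing.Theory Num.Theory.
Set Implicit Arguments. Unset Strict Implicit. Unset Printing Implicit Defensive.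

Section MatrixFacts.
Local Open Scope ring_scope.

Lemma exists_row_entry_neq0 (R : nmodType) n (u : 'rV[R]_n) :
  u != 0 -> exists i, u 0 i != 0.
Proof.
move=> u_neq0; apply/existsP; apply: contraR u_neq0 => /existsPn ui0.
by apply/eqP/rowP => i; rewrite mxE; apply/eqP/negbNE.
Qed.

Lemma mxrank_kermx_ge (F : fieldType) m r (X : 'M[F]_(m, r)) : (m - r <= \rank (kermx X))%N.
Proof. by rewrite mxrank_ker leq_sub2l ?rank_leq_col. Qed.

Variables (F : fieldType) (m m' k : nat) (f : 'I_m' -> 'I_m) (B : 'M[F]_(m, k)).

Lemma mxrank_rowsub_inj : injective f -> row_free B -> \rank (rowsub f B) = m'.
Proof.
move=> inj_f freeB; rewrite rowsubE mxrankMfree //; apply/eqP/inj_row_free => v.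
move=> /rowP vf0; apply/rowP => r; have := vf0 (f r); rewrite !mxE => <-.
rewrite (bigD1 r) //= big1 ?addr0 => [|r' r'r]; first by rewrite !mxE eqxx mulr1.
by rewrite !mxE (inj_eq inj_f) (negbTE r'r) mulr0.
Qed.

Lemma submx_rowsubP (u : 'rV_k) : (u <= rowsub f B)%MS ->
  exists2 w : 'rV_m, u = w *m B & forall i, w 0 i != 0 -> i \in codom f.
Proof.
case/submxP => z ->; rewrite rowsubE mulmxA; exists (z *m rowsub f 1%:M) => // i.
apply: contraR => /codomP f'i; rewrite mxE big1 // => r _.
by rewrite !mxE; case: eqP => [fri|]; [case: f'i; exists r | rewrite mulr0].
Qed.

End MatrixFacts.

Section HermitianSpectrum.
Local Open Scope ring_scope.
Local Open Scope sesquilinear_scope.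
Variable n : nat.

Definition hform (A : 'M[algC]_n) (u : 'rV[algC]_n) : algC := (u *m A *m u^t*) 0 0.
Definition sqnorm (u : 'rV[algC]_n) : algC := \sum_i `|u 0 i| ^+ 2.

Lemma sqnormE u : sqnorm u = (u *m u^t*) 0 0.
Proof. by rewrite mxE; apply: eq_bigr => i _; rewrite !mxE normCK. Qed.

Lemma hformE A u : hform A u = \sum_i \sum_j u 0 i * A i j * (u 0 j)^*.
Proof.
rewrite /hform mxE exchange_big; apply: eq_bigr => j _.
by rewrite !mxE big_distrl; apply: eq_bigr => i _; rewrite ?mxE.
Qed.

Lemma ler_sum_wsqr (a b : 'I_n -> algC) (w : 'rV[algC]_n) :
  (forall i, w 0 i != 0 -> a i <= b i) ->
  \sum_i a i * `|w 0 i| ^+ 2 <= \sum_i b i * `|w 0 i| ^+ 2.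
Proof.
move=> le_ab; apply: ler_sum => i _; have [->|/le_ab le_abi] := eqVneq (w 0 i) 0.
  by rewrite normr0 expr0n !mulr0.
by rewrite ler_wpM2r ?exprn_ge0.
Qed.

Lemma ltr_sum_wsqr (a b : 'I_n -> algC) (w : 'rV[algC]_n) : w != 0 ->
  (forall i, w 0 i != 0 -> a i < b i) ->
  \sum_i a i * `|w 0 i| ^+ 2 < \sum_i b i * `|w 0 i| ^+ 2.
Proof.
move=> /exists_row_entry_neq0 [i wi0] lt_ab.
rewrite (bigD1 i) //= [X in _ < X](bigD1 i) //= ltr_leD ?ltr_pM2r ?exprn_gt0 ?normr_gt0 ?lt_ab //.
apply: ler_sum => j _; have [->|/lt_ab/ltW le_abj] := eqVneq (w 0 j) 0.
  by rewrite normr0 expr0n !mulr0.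
by rewrite ler_wpM2r ?exprn_ge0.
Qed.

Variable A : 'M[algC]_n.
Hypothesis hermA : A \is hermsymmx.

Local Notation P := (spectralmx A).
Local Notation eig := (spectral_diag A 0).

Lemma hermsymmx_spectralE : A = P^t* *m diag_mx (spectral_diag A) *m P.
Proof.
have /orthomx_spectralP := hermitian_normalmx hermA.
by rewrite invmx_unitary ?spectral_unitarymx.
Qed.

Lemma spectral_diag_real i : eig i \is Num.real.
Proof. by have /mxOverP := hermitian_spectral_diag_real hermA; apply. Qed.

Lemma char_poly_hermsymmx : char_poly A = \prod_(i < n) ('X - (eig i)%:P).
Proof.
have PtP : P^t* *m P = 1%:M.
  by rewrite -invmx_unitary ?spectral_unitarymx // mulVmx // spectral_unit.
have -> : char_poly A = char_poly (diag_mx (spectral_diag A)).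
  rewrite /char_poly /char_poly_mx {1}hermsymmx_spectralE !map_mxM.
  set Q := map_mx polyC (P^t*); set R := map_mx polyC P.
  have QR : Q *m R = 1%:M by rewrite -map_mxM PtP map_mx1.
  have -> : 'X%:M - Q *m map_mx polyC (diag_mx (spectral_diag A)) *m R =
            Q *m ('X%:M - map_mx polyC (diag_mx (spectral_diag A))) *m R.
    by rewrite mulmxBr mulmxBl mul_mx_scalar -scalemxAl QR scalemx1.
  by rewrite !det_mulmx mulrAC -det_mulmx QR det1 mul1r.
rewrite char_poly_trig ?diag_mx_is_trig //.
by apply: eq_bigr => i _; rewrite !mxE eqxx mulr1n.
Qed.

Lemma hform_spectral w : hform A (w *m P) = \sum_i eig i * `|w 0 i| ^+ 2.
Proof.
rewrite /hform {2}hermsymmx_spectralE trmx_mul map_mxM.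
rewrite !mulmxA !mulmxtVK ?spectral_unitarymx // mul_mx_diag mxE.
by apply: eq_bigr => i _; rewrite !mxE normCK mulrAC mulrC.
Qed.

Lemma sqnorm_spectral w : sqnorm (w *m P) = sqnorm w.
Proof.
by rewrite !sqnormE trmx_mul map_mxM mulmxA mulmxtVK ?spectral_unitarymx.
Qed.

Lemma eig_le_of_hform_le b : (forall u, hform A u <= b * sqnorm u) -> forall i, eig i <= b.
Proof.
move=> hAb i; pose e : 'rV[algC]_n := delta_mx 0 i.
have sum_e (F : 'I_n -> algC) : \sum_j F j * `|e 0 j| ^+ 2 = F i.
  rewrite (bigD1 i) //= big1 ?addr0 => [|j ji]; rewrite !mxE ?eqxx ?(negbTE ji).
    by rewrite normr1 expr1n mulr1.
  by rewrite normr0 expr0n mulr0.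
have sqnorm_e : sqnorm e = 1.
  by have := sum_e (fun _ => 1); under eq_bigr do rewrite mul1r.
by have := hAb (e *m P); rewrite hform_spectral sqnorm_spectral sum_e sqnorm_e mulr1.
Qed.

Lemma rank_disjoint_eigvecs k (W : 'M_(k, n)) (q : {set 'I_n}) :
  (forall w : 'rV_n, w != 0 -> (forall i, w 0 i != 0 -> i \in q) -> ~~ (w *m P <= W)%MS) ->
  (\rank W + #|q| <= n)%N.
Proof.
move=> Wq; set V := rowsub (@enum_val _ (mem q)) P.
have rankV : \rank V = #|q|.
  by rewrite mxrank_rowsub_inj //; [exact: enum_val_inj | rewrite row_free_unit spectral_unit].
have capWV : (W :&: V = 0)%MS.
  apply/eqP/rowV0P => u uWV; have uW := submx_trans uWV (capmxSl _ _).
  have [w uE wq] := submx_rowsubP (submx_trans uWV (capmxSr _ _)).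
  have [w0|/Wq/(_ _)/negP[]] := eqVneq w 0; first by rewrite uE w0 mul0mx.
    by move=> i /wq /codomP [r ->]; have := enum_valP r.
  by rewrite -uE.
by rewrite -rankV -mxrank_disjoint_sum // rank_leq_col.
Qed.

Lemma card_eig_ge_add_lt c : c \is Num.real ->
  (#|[set i | (c <= eig i)%R]| + #|[set i | (eig i < c)%R]|)%N = n.
Proof.
move=> creal; rewrite -[RHS]card_ord -(cardsC [set i | c <= eig i]); congr (_ + _)%N.
by apply: eq_card => i; rewrite !inE real_ltNge ?spectral_diag_real.
Qed.

Lemma rank_le_card_eig_ge k (W : 'M_(k, n)) c : c \is Num.real ->
  (forall u, (u <= W)%MS -> c * sqnorm u <= hform A u) ->
  (\rank W <= #|[set i | (c <= eig i)%R]|)%N.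
Proof.
move=> creal hWc; rewrite -(leq_add2r #|[set i | (eig i < c)%R]|) card_eig_ge_add_lt //.
apply: rank_disjoint_eigvecs => w w0 wq; apply/negP => /hWc.
rewrite hform_spectral sqnorm_spectral /sqnorm mulr_sumr => le_c.
have lt_c : \sum_i eig i * `|w 0 i| ^+ 2 < \sum_i c * `|w 0 i| ^+ 2.
  by apply: ltr_sum_wsqr => // j /wq; rewrite inE.
by have := lt_le_trans lt_c le_c; rewrite ltxx.
Qed.

Lemma rank_le_card_eig_lt k (W : 'M_(k, n)) c : c \is Num.real ->
  (forall u, (u <= W)%MS -> u != 0 -> hform A u < c * sqnorm u) ->
  (\rank W <= #|[set i | (eig i < c)%R]|)%N.
Proof.
move=> creal hWc; rewrite -(leq_add2l #|[set i | (c <= eig i)%R]|) card_eig_ge_add_lt // addnC.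
apply: rank_disjoint_eigvecs => w w0 wq; apply/negP => /hWc.
rewrite mulmx_free_eq0 ?row_free_unit ?spectral_unit // w0 hform_spectral sqnorm_spectral.
rewrite /sqnorm mulr_sumr => /(_ isT) lt_c.
have le_c : \sum_i c * `|w 0 i| ^+ 2 <= \sum_i eig i * `|w 0 i| ^+ 2.
  by apply: ler_sum_wsqr => j /wq; rewrite inE.
by have := le_lt_trans le_c lt_c; rewrite ltxx.
Qed.

Lemma card_eig_ge_eq c m k1 k2 (W1 : 'M_(k1, n)) (W2 : 'M_(k2, n)) : c \is Num.real ->
  (forall u, (u <= W1)%MS -> c * sqnorm u <= hform A u) ->
  (forall u, (u <= W2)%MS -> u != 0 -> hform A u < c * sqnorm u) ->
  (m <= \rank W1)%N -> (n <= m + \rank W2)%N ->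
  #|[set i | (c <= eig i)%R]| = m.
Proof.
move=> creal /(rank_le_card_eig_ge creal) geW1 /(rank_le_card_eig_lt creal) ltW2 m_le n_le.
apply/eqP; rewrite eqn_leq (leq_trans m_le geW1) andbT.
rewrite -(leq_add2r #|[set i | (eig i < c)%R]|) card_eig_ge_add_lt //.
by rewrite (leq_trans n_le) // leq_add2l.
Qed.

Lemma count_in_spectral lo hi : (forall i, eig i <= hi) ->
  count_in lo hi [seq eig i | i <- index_enum 'I_n] = #|[set i | (lo <= eig i)%R]|.
Proof.
move=> le_hi; rewrite /count_in count_map -sum1_count -sum1_card.
by apply: eq_bigl => i; rewrite inE /= le_hi andbT.
Qed.

End HermitianSpectrum.

Lemma normCB_sqr (x y : algC) :
  (`|x - y| ^+ 2 = `|x| ^+ 2 + `|y| ^+ 2 - x * y^* - y * x^*)%R.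
Proof. by rewrite !normCK rmorphB /=; ring. Qed.

Lemma sum_normCB_sqr (I : finType) (P : pred I) (x : I -> algC) :
  (\sum_(i | P i) \sum_(j | P j) `|x i - x j| ^+ 2 =
   2 * #|P|%:R * \sum_(i | P i) `|x i| ^+ 2 - 2 * `|\sum_(i | P i) x i| ^+ 2)%R.
Proof.
set a := (\sum_(i | P i) `|x i| ^+ 2)%R; set s := (\sum_(i | P i) x i)%R.
have inner i : (\sum_(j | P j) `|x i - x j| ^+ 2 =
                 #|P|%:R * `|x i| ^+ 2 + a - x i * s^* - s * (x i)^*)%R.
  under eq_bigr => j _ do rewrite normCB_sqr.
  by rewrite !sumrB big_split /= sumr_const mulr_natl /s rmorph_sum mulr_sumr mulr_suml.
rewrite (eq_bigr _ (fun i _ => inner i)) !sumrB big_split /= -mulr_sumr.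
rewrite sumr_const -mulr_suml -mulr_sumr -/a -/s -rmorph_sum -/s !normCK; ring.
Qed.

Section Laplacian.
Local Open Scope ring_scope.
Local Open Scope sesquilinear_scope.
Variables (n : nat) (adj : rel 'I_n).
Hypotheses (adj_sym : symmetric adj) (adj_irr : irreflexive adj).

Definition laplacian : 'M[algC]_n :=
  \matrix_(i, j) (if i == j then #|[set j | adj i j]|%:R else - (adj i j)%:R).

Definition energy (u : 'rV[algC]_n) : algC :=
  \sum_i \sum_j (adj i j)%:R * `|u 0 i - u 0 j| ^+ 2.

Lemma laplacian_herm : laplacian \is hermsymmx.
Proof.
apply/is_hermitianmxP; rewrite expr0 scale1r; apply/matrixP => i j; rewrite !mxE.
by rewrite eq_sym adj_sym; case: eqP => [->|_]; rewrite ?rmorphN ?rmorph_nat.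
Qed.

Lemma laplacianE i j :
  laplacian i j = (i == j)%:R * \sum_k (adj i k)%:R - (adj i j)%:R.
Proof.
rewrite mxE; case: eqP => [<-|_]; last by rewrite mul0r sub0r.
rewrite adj_irr mul1r subr0 -sum1dep_card natr_sum big_mkcond.
by apply: eq_bigr => k _; case: adj.
Qed.

Lemma hform_laplacian u : 2 * hform laplacian u = energy u.
Proof.
pose half := \sum_i \sum_j (adj i j)%:R * (`|u 0 i| ^+ 2 - u 0 i * (u 0 j)^*).
have -> : hform laplacian u = half.
  rewrite hformE; apply: eq_bigr => i _.
  under eq_bigr => j _ do rewrite laplacianE mulrBr mulrBl.
  rewrite sumrB (bigD1 i) //= [X in _ + X - _]big1 => [|j /negPf ji]; last first.
    by rewrite eq_sym ji !mul0r mulr0 !mul0r.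
  rewrite eqxx mul1r addr0 mulr_sumr mulr_suml -sumrB; apply: eq_bigr => j _.
  by rewrite normCK; ring.
have swap : half = \sum_i \sum_j (adj i j)%:R * (`|u 0 j| ^+ 2 - u 0 j * (u 0 i)^*).
  by rewrite exchange_big; apply: eq_bigr => i _; apply: eq_bigr => j _; rewrite adj_sym.
rewrite mulr2n mulrDl mul1r {2}swap -big_split; apply: eq_bigr => i _.
rewrite -big_split; apply: eq_bigr => j _; rewrite normCB_sqr /=; ring.
Qed.

Lemma hform_laplacian_le u : hform laplacian u <= n%:R * sqnorm u.
Proof.
rewrite -(ler_pM2l (ltr0n _ 2)) hform_laplacian mulrA.
apply: (@le_trans _ _ (\sum_i \sum_j `|u 0 i - u 0 j| ^+ 2)).
  apply: ler_sum => i _; apply: ler_sum => j _.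
  by case: (adj i j); rewrite ?mul1r ?mul0r ?exprn_ge0.
have := sum_normCB_sqr predT (fun i => u 0 i).
rewrite (eq_card (B := 'I_n)) // card_ord => ->.
by rewrite /sqnorm lerBlDr lerDl mulr_ge0 ?exprn_ge0.
Qed.

Lemma energy_ge_clique (S : {set 'I_n}) (u : 'rV[algC]_n) :
  (forall i, i \notin S -> u 0 i = 0) -> \sum_i u 0 i = 0 ->
  {in S &, forall i j, i != j -> adj i j} ->
  {in S, forall i, exists2 j, j \notin S & adj i j} ->
  2 * #|S|.+1%:R * sqnorm u <= energy u.
Proof.
move=> u_off sum_u S_clique S_exit.
pose E (P Q : pred 'I_n) := \sum_(i | P i) \sum_(j | Q j) (adj i j)%:R * `|u 0 i - u 0 j| ^+ 2.
have sqnormS : sqnorm u = \sum_(i in S) `|u 0 i| ^+ 2.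
  rewrite /sqnorm (bigID (mem S)) /= [X in _ + X]big1 ?addr0 // => i /u_off ->.
  by rewrite normr0 expr0n.
have ESS : E (mem S) (mem S) = 2 * #|S|%:R * sqnorm u.
  have := sum_normCB_sqr (mem S) (fun i => u 0 i).
  have -> : \sum_(i in S) u 0 i = 0.
    rewrite -[X in _ = X]sum_u [X in _ = X](bigID (mem S)) /=.
    by rewrite [X in _ = _ + X]big1 ?addr0 // => i /u_off.
  rewrite normr0 expr0n mulr0 subr0 -sqnormS => <-.
  apply: eq_bigr => i Si; apply: eq_bigr => j Sj.
  by case: (eqVneq i j) => [->|ij]; rewrite ?subrr ?normr0 ?expr0n ?mulr0 // S_clique ?mul1r.
have ESN : sqnorm u <= E (mem S) (predC (mem S)).
  rewrite sqnormS; apply: ler_sum => i Si; have [j Sj aij] := S_exit i Si.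
  rewrite (bigD1 j) //= aij mul1r (u_off j Sj) subr0 lerDl.
  by apply: sumr_ge0 => k _; rewrite mulr_ge0 ?exprn_ge0.
have ENS : E (predC (mem S)) (mem S) = E (mem S) (predC (mem S)).
  rewrite /E exchange_big; apply: eq_bigr => i _; apply: eq_bigr => j _.
  by rewrite adj_sym -normrN opprB.
have ENN : 0 <= E (predC (mem S)) (predC (mem S)).
  by apply: sumr_ge0 => i _; apply: sumr_ge0 => j _; rewrite mulr_ge0 ?exprn_ge0.
have -> : energy u = E (mem S) (mem S) + E (mem S) (predC (mem S)) +
                     (E (predC (mem S)) (mem S) + E (predC (mem S)) (predC (mem S))).
  rewrite /energy (bigID (mem S)) /= -!big_split /=.
  by congr (_ + _); apply: eq_bigr => i _; rewrite (bigID (mem S)).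
rewrite ESS ENS.
have -> : 2 * #|S|.+1%:R * sqnorm u = 2 * #|S|%:R * sqnorm u + sqnorm u + (sqnorm u + 0).
  by rewrite -addn1 natrD; ring.
by apply: lerD; [rewrite lerD2l | apply: lerD].
Qed.

Lemma energy_lt_weighted (wt : 'I_n -> 'I_n -> nat) (k b : nat) (u : 'rV[algC]_n) :
  (forall i j, adj i j ->
     k%:R * `|u 0 i - u 0 j| ^+ 2 <= (wt i j)%:R * `|u 0 i| ^+ 2 + (wt j i)%:R * `|u 0 j| ^+ 2) ->
  (forall i, (\sum_j adj i j * wt i j < b)%N) -> u != 0 ->
  k%:R * energy u < 2 * b%:R * sqnorm u.
Proof.
move=> wt_pair wt_deg u_neq0.
pose deg_wt i : algC := (\sum_j adj i j * wt i j)%N%:R.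
have deg_wtE i : \sum_j (adj i j)%:R * (wt i j)%:R * `|u 0 i| ^+ 2 = deg_wt i * `|u 0 i| ^+ 2.
  by rewrite /deg_wt natr_sum mulr_suml; apply: eq_bigr => j _; rewrite natrM.
apply: (@le_lt_trans _ _ (2 * \sum_i deg_wt i * `|u 0 i| ^+ 2)).
  rewrite /energy [X in _ <= X]mulr_natl mulr2n mulr_sumr.
  have sym : \sum_i \sum_j (adj i j)%:R * ((wt j i)%:R * `|u 0 j| ^+ 2) =
             \sum_i deg_wt i * `|u 0 i| ^+ 2.
    rewrite exchange_big; apply: eq_bigr => i _; rewrite -deg_wtE.
    by apply: eq_bigr => j _; rewrite adj_sym mulrA.
  rewrite -{2}sym -(eq_bigr _ (fun i _ => deg_wtE i)) -big_split /=; apply: ler_sum => i _.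
  rewrite mulr_sumr -big_split /=; apply: ler_sum => j _.
  case aij : (adj i j); last by rewrite !mul0r mulr0 addr0.
  by rewrite /= !mulr1n !mul1r wt_pair.
rewrite -mulrA ltr_pM2l // /sqnorm mulr_sumr.
by apply: ltr_sum_wsqr => // i _; rewrite ltr_nat wt_deg.
Qed.

End Laplacian.

(* Weights for [k |x - y|^2 <= w(sx,sy) |x|^2 + w(sy,sx) |y|^2], where [sx], [sy] tell
   whether the endpoints lie in the clique, on which the vectors considered are constant. *)
Definition pair_wt (k : nat) (sx sy : bool) : nat :=
  if sx then (if sy then 0 else k * k.+1) else (if sy then k.+1 else 2 * k).

Lemma pair_wt_ineq (k : nat) (sx sy : bool) (x y : algC) : (sx -> sy -> x = y) ->
  (k%:R * `|x - y| ^+ 2 <= (pair_wt k sx sy)%:R * `|x| ^+ 2 + (pair_wt k sy sx)%:R * `|y| ^+ 2)%R.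
Proof.
rewrite -subr_ge0 /pair_wt !normCK; case: sx; case: sy => /= xy.
- by rewrite (xy isT isT) (_ : (_ - _ = 0 :> algC)%R) ?lexx //; ring.
- have -> : ((k * k.+1)%:R * (x * x^*) + k.+1%:R * (y * y^*) - k%:R * ((x - y) * (x - y)^*) =
             `|k%:R * x + y| ^+ 2 :> algC)%R.
    by rewrite normCK ?rmorphD ?rmorphB ?rmorphM /= ?conjC_nat ?natrM; ring.
  by rewrite exprn_ge0.
- have -> : (k.+1%:R * (x * x^*) + (k * k.+1)%:R * (y * y^*) - k%:R * ((x - y) * (x - y)^*) =
             `|x + k%:R * y| ^+ 2 :> algC)%R.
    by rewrite normCK ?rmorphD ?rmorphB ?rmorphM /= ?conjC_nat ?natrM; ring.
  by rewrite exprn_ge0.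
- have -> : ((2 * k)%:R * (x * x^*) + (2 * k)%:R * (y * y^*) - k%:R * ((x - y) * (x - y)^*) =
             k%:R * `|x + y| ^+ 2 :> algC)%R.
    by rewrite normCK ?rmorphD ?rmorphB /= ?natrM; ring.
  by rewrite mulr_ge0 ?exprn_ge0.
Qed.

Lemma sum_indicator_ord n lo hi : \sum_(j < n) (lo <= j < hi) = minn n hi - lo.
Proof.
elim: n => [|n IH]; first by rewrite big_ord0; lia.
by rewrite big_ord_recr /= IH; case: (lo <= n < hi) /andP; lia.
Qed.

Lemma sum_le_intervals n (f : nat -> nat) (s : seq (nat * nat * nat)) :
  (forall j, j < n -> f j <= \sum_(x <- s) x.1.1 * (x.1.2 <= j < x.2)) ->
  \sum_(j < n) f j <= \sum_(x <- s) x.1.1 * (x.2 - x.1.2).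
Proof.
move=> f_le; apply: (@leq_trans (\sum_(j < n) \sum_(x <- s) x.1.1 * (x.1.2 <= j < x.2))).
  by apply: leq_sum => j _; exact: f_le.
rewrite exchange_big; apply: leq_sum => x _; rewrite -big_distrr leq_mul2l.
by rewrite sum_indicator_ord; apply/orP; right; lia.
Qed.

Lemma card_set_ord n (P : pred nat) : #|[set i : 'I_n | P i]| = \sum_(i < n) P i.
Proof. by rewrite -sum1dep_card big_mkcond; apply: eq_bigr => i _; case: (P i). Qed.

Ltac split_bool_hyps := repeat match goal with
  | H : is_true (_ || _) |- _ => case/orP: H => H
  | H : is_true (_ && _) |- _ => let H1 := fresh in case/andP: H => H1 H
  | H : (_ || _) = false |- _ => move/negbT: H; rewrite negb_or => H
  | H : is_true (~~ (_ || _)) |- _ => move: H; rewrite negb_or => H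
  end.

Section GraphG.
Variables n d t a : nat.

Lemma Gadj_sym i j : Gadj d t a i j = Gadj d t a j i.
Proof. by rewrite /Gadj orbC. Qed.

Lemma Gadj_path i : i < d -> Gadj d t a i i.+1.
Proof. by move=> lt_id; rewrite /Gadj /Gedge eqxx lt_id. Qed.

Lemma Gadj_tK i j : d < j -> (i == t.-1) || (i == t) -> Gadj d t a i j.
Proof. by move=> lt_dj it; rewrite /Gadj /Gedge lt_dj it !orbT. Qed.

Lemma Gadj_KK i j : d < i -> d < j -> i != j -> Gadj d t a i j.
Proof. by move=> lt_di lt_dj ij; rewrite /Gadj /Gedge lt_di lt_dj ij orbT. Qed.

Lemma Gadj_tm2 j : d < j <= d + a -> Gadj d t a (t - 2) j.
Proof. by case/andP=> lt_dj le_ja; rewrite /Gadj /Gedge lt_dj le_ja eqxx !orbT. Qed.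

Lemma Gadj_tp1 j : d + a < j -> Gadj d t a t.+1 j.
Proof. by move=> lt_aj; rewrite /Gadj /Gedge lt_aj eqxx !orbT. Qed.

Local Notation adjG := (fun i j : 'I_n => Gadj d t a i j).

Lemma Glap_herm : Glap n d t a \is hermsymmx.
Proof. exact: (laplacian_herm (adj := adjG) Gadj_sym). Qed.

Hypotheses (d_ge3 : 3 <= d) (d_le : d <= n - 2) (t_ge2 : 2 <= t) (t_le : t <= d - 1)
  (a_ge1 : 1 <= a) (a_le : a <= n - d - 2).

Local Notation K := (n - d).

Lemma Gadj_irr i : Gadj d t a i i = false.
Proof. by apply/negbTE; rewrite /Gadj orbb /Gedge; apply/negP => adj_ii; split_bool_hyps; lia. Qed.

Lemma spectral_diag_Glap_le i : (spectral_diag (Glap n d t a) 0 i <= n%:R)%R.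
Proof.
exact: (eig_le_of_hform_le Glap_herm (hform_laplacian_le (adj := adjG) Gadj_sym Gadj_irr)).
Qed.

(* [in_clique i]: vertex [i] is v_t, v_(t+1) or a vertex of K_(n-d-1); these form a clique,
   and [outer_nbr i] is the unique neighbour of such a vertex outside it. *)
Definition in_clique (i : nat) : bool := [|| i == t.-1, i == t | d < i].
Definition outer_nbr (i : nat) : nat :=
  if (i == t.-1) || (d < i <= d + a) then t - 2 else t.+1.
Definition wt (i j : nat) : nat := pair_wt K (in_clique i) (in_clique j).
Definition wdeg (i : nat) : nat := \sum_(j < n) Gadj d t a i j * wt i j.

Lemma clique_adj i j : in_clique i -> in_clique j -> i != j -> Gadj d t a i j.
Proof.
have [tm1_lt_d t_lt_d] : t.-1 < d /\ t < d by lia.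
move=> /or3P [/eqP-> | /eqP-> | lt_di] /or3P [/eqP-> | /eqP-> | lt_dj]; rewrite ?eqxx //= => ij.
- by rewrite -[t in Gadj _ _ _ _ t]prednK ?Gadj_path; lia.
- by rewrite Gadj_tK ?eqxx.
- by rewrite Gadj_sym -[t in Gadj _ _ _ _ t]prednK ?Gadj_path; lia.
- by rewrite Gadj_tK ?eqxx ?orbT.
- by rewrite Gadj_sym Gadj_tK ?eqxx.
- by rewrite Gadj_sym Gadj_tK ?eqxx ?orbT.
- exact: Gadj_KK.
Qed.

Lemma outer_nbr_adj i : in_clique i -> Gadj d t a i (outer_nbr i).
Proof.
rewrite /outer_nbr => /or3P [/eqP-> | /eqP-> | lt_di]; rewrite ?eqxx /=.
- by rewrite Gadj_sym (_ : t.-1 = (t - 2).+1) ?Gadj_path; lia.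
- by rewrite ifN ?Gadj_path; lia.
case: ifP => [/orP [/eqP it | le_ia] | /negbT/norP [_]]; first lia.
  by rewrite Gadj_sym Gadj_tm2.
by rewrite negb_and lt_di /= -ltnNge => lt_ai; rewrite Gadj_sym Gadj_tp1.
Qed.

Lemma outer_nbr_notin_clique i : ~~ in_clique (outer_nbr i).
Proof. by rewrite /in_clique /outer_nbr; case: ifP => _; lia. Qed.

Lemma outer_nbr_lt_n i : outer_nbr i < n.
Proof. by rewrite /outer_nbr; case: ifP => _; lia. Qed.

Lemma wdeg_le_intervals i (s : seq (nat * nat * nat)) :
  (forall j, j < n -> Gadj d t a i j * wt i j <= \sum_(x <- s) x.1.1 * (x.1.2 <= j < x.2)) ->
  wdeg i <= \sum_(x <- s) x.1.1 * (x.2 - x.1.2).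
Proof. exact: sum_le_intervals. Qed.

Ltac nbr_arith :=
  rewrite /wt /pair_wt; unfold in_clique in *;
  case: (boolP (Gadj _ _ _ _ _)) => [|_]; last (rewrite mul0n; exact: leq0n);
  rewrite /Gadj /Gedge => ?; split_bool_hyps; try (exfalso; lia);
  repeat case: ifP => ?; split_bool_hyps; try (exfalso; lia);
  repeat match goal with |- context [nat_of_bool ?b] =>
    lazymatch b with true => fail | false => fail | _ => case: (boolP b) => ? end end;
  rewrite ?muln0 ?muln1 ?mul1n ?addn0 ?add0n; lia.

Lemma wdeg_in_clique i : in_clique i -> wdeg i < K * (K + 2).
Proof.
move=> iS; apply: leq_ltn_trans
  (wdeg_le_intervals (s := [:: (K * K.+1, outer_nbr i, (outer_nbr i).+1)]) _) _.
  by move=> j jn; rewrite big_cons big_nil addn0 /= /outer_nbr; nbr_arith.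
by rewrite big_cons big_nil /= subSnn muln1 addn0 ltn_mul2l addn2; lia.
Qed.

Lemma wdeg_tm2 : wdeg (t - 2) < K * (K + 2).
Proof.
apply: leq_ltn_trans (wdeg_le_intervals
  (s := [:: (2 * K, t - 3, t - 2); (K.+1, t.-1, t); (K.+1, d.+1, (d + a).+1)]) _) _.
  by move=> j jn; rewrite !big_cons big_nil addn0 /=; nbr_arith.
have e1 : t - t.-1 = 1 by lia.
have e2 : (d + a).+1 - d.+1 = a by lia.
have x_le1 : t - 2 - (t - 3) <= 1 by lia.
have a2_le_K : a + 2 <= K by lia.
rewrite !big_cons big_nil /= addn0 e1 e2.
by move: (t - 2 - (t - 3)) K x_le1 a2_le_K => x k x_le1 a2_le_K; clear -x_le1 a2_le_K; nia.
Qed.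

Lemma wdeg_tp1 : wdeg t.+1 < K * (K + 2).
Proof.
apply: leq_ltn_trans (wdeg_le_intervals
  (s := [:: (K.+1, t, t.+1); (2 * K, t.+2, t.+3); (K.+1, (d + a).+1, n)]) _) _.
  by move=> j jn; rewrite !big_cons big_nil addn0 /=; nbr_arith.
have e1 : t.+3 - t.+2 = 1 by lia.
have e2 : n - (d + a).+1 = K - a.+1 by lia.
have y_le : K - a.+1 + 2 <= K by lia.
rewrite !big_cons big_nil /= addn0 subSnn e1 e2.
by move: (K - a.+1) K y_le => y k y_le; clear -y_le; nia.
Qed.

Lemma wdeg_path i : ~~ in_clique i -> i != t - 2 -> i != t.+1 -> wdeg i < K * (K + 2).
Proof.
move=> iS it2 it1; apply: leq_ltn_trans
  (wdeg_le_intervals (s := [:: (2 * K, i.-1, i); (2 * K, i.+1, i.+2)]) _) _.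
  by move=> j jn; rewrite !big_cons big_nil addn0 /=; nbr_arith.
have e1 : i.+2 - i.+1 = 1 by lia.
have x_le1 : i - i.-1 <= 1 by lia.
have k_ge3 : 3 <= K by lia.
rewrite !big_cons big_nil /= addn0 e1.
by move: (i - i.-1) K x_le1 k_ge3 => x k x_le1 k_ge3; clear -x_le1 k_ge3; nia.
Qed.

Lemma wdeg_lt i : wdeg i < K * (K + 2).
Proof.
have [/wdeg_in_clique //|iS] := boolP (in_clique i).
have [->|it2] := eqVneq i (t - 2); first exact: wdeg_tm2.
have [->|it1] := eqVneq i t.+1; first exact: wdeg_tp1.
exact: wdeg_path.
Qed.

Definition clique : {set 'I_n} := [set i : 'I_n | in_clique i].

Lemma card_clique : #|clique| = K.+1.
Proof.
rewrite card_set_ord (eq_bigr (fun j : 'I_n => (t.-1 <= j < t.+1) + (d < j < n))).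
  by rewrite big_split /= !sum_indicator_ord; lia.
by move=> j _; have := ltn_ord j; rewrite /in_clique; lia.
Qed.

Fact tm1_lt_n : t.-1 < n. Proof. lia. Qed.
Definition vt : 'I_n := Ordinal tm1_lt_n.

Lemma vt_in_clique : vt \in clique.
Proof. by rewrite inE /in_clique eqxx. Qed.

(* Explicit [{pred 'I_n}] constants, so that [enum_val] and [enum_rank_in] agree on them. *)
Definition off_clique : {pred 'I_n} := [pred i | i \notin clique].
Definition clique_vt : {pred 'I_n} := [pred i | (i \in clique) && (i != vt)].

Lemma card_off_clique : #|off_clique| = n - K.+1.
Proof.
have -> : #|off_clique| = #|~: clique| by apply: eq_card => i; rewrite !inE.
by have := cardsC clique; rewrite card_clique card_ord; lia.
Qed.

Lemma card_clique_vt : #|clique_vt| = K.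
Proof.
have -> : #|clique_vt| = #|clique :\ vt| by apply: eq_card => i; rewrite !inE andbC.
by have := cardsD1 vt clique; rewrite vt_in_clique card_clique add1n => -[].
Qed.

(* The vectors vanishing off the clique with zero sum, and the vectors constant on the
   clique, as kernels of their defining linear constraints. *)
Definition Wzsum : 'M[algC]_n :=
  kermx (row_mx (colsub (@enum_val _ off_clique) 1%:M) (const_mx 1 : 'M_(n, 1)))%R.

Definition Wconst : 'M[algC]_n :=
  kermx (colsub (@enum_val _ clique_vt) (\matrix_(i, j) ((i == j)%:R - (i == vt)%:R)))%R.

Lemma rank_Wzsum : K <= \rank Wzsum.
Proof. by apply: leq_trans (mxrank_kermx_ge _); rewrite card_off_clique; lia. Qed.

Lemma rank_Wconst : d <= \rank Wconst.
Proof. by apply: leq_trans (mxrank_kermx_ge _); rewrite card_clique_vt; lia. Qed.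

Local Open Scope ring_scope.

Lemma sum_mul_delta (F : 'I_n -> algC) i : \sum_j F j * (j == i)%:R = F i.
Proof. by rewrite (bigD1 i) //= eqxx mulr1 big1 ?addr0 // => j /negbTE ->; rewrite mulr0. Qed.

Lemma Wzsum_support (u : 'rV_n) : (u <= Wzsum)%MS ->
  (forall i, i \notin clique -> u 0 i = 0) /\ \sum_i u 0 i = 0.
Proof.
rewrite sub_kermx mul_mx_row row_mx_eq0 mulmx_colsub mulmx1 => /andP [/eqP u_off /eqP u_sum].
split=> [i iS | ].
  have i_off : i \in off_clique by rewrite inE.
  by move/rowP/(_ (enum_rank_in i_off i)): u_off; rewrite !mxE enum_rankK_in.
move/rowP/(_ 0): u_sum; rewrite !mxE => u_sum.
by apply: etrans u_sum; apply: eq_bigr => j _; rewrite mxE mulr1.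
Qed.

Lemma Wconst_eq (u : 'rV_n) : (u <= Wconst)%MS -> forall i, i \in clique -> u 0 i = u 0 vt.
Proof.
rewrite sub_kermx mulmx_colsub => /eqP uM i iS.
have [->//|ivt] := eqVneq i vt.
have i_vt : i \in clique_vt by rewrite inE iS ivt.
move/rowP/(_ (enum_rank_in i_vt i)): uM; rewrite !mxE enum_rankK_in //.
under eq_bigr do rewrite mxE mulrBr.
by rewrite sumrB !sum_mul_delta => /eqP; rewrite subr_eq0 => /eqP.
Qed.

Lemma hform_Wzsum_ge u : (u <= Wzsum)%MS -> (K + 2)%:R * sqnorm u <= hform (Glap n d t a) u.
Proof.
move=> /Wzsum_support [u_off sum_u].
have clique_adjG : {in clique &, forall i j, i != j -> adjG i j}.
  by move=> i j; rewrite !inE => iS jS ij; apply: clique_adj.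
have outer : {in clique, forall i, exists2 j, j \notin clique & adjG i j}.
  move=> i; rewrite inE => iS; exists (Ordinal (outer_nbr_lt_n i)); last exact: outer_nbr_adj.
  by rewrite inE outer_nbr_notin_clique.
have := energy_ge_clique Gadj_sym u_off sum_u clique_adjG outer.
by rewrite card_clique -(hform_laplacian Gadj_sym Gadj_irr) -mulrA ler_pM2l // addn2.
Qed.

Lemma hform_Wconst_lt u : (u <= Wconst)%MS -> u != 0 ->
  hform (Glap n d t a) u < (K + 2)%:R * sqnorm u.
Proof.
move=> uW u_neq0.
have pair i j : adjG i j -> K%:R * `|u 0 i - u 0 j| ^+ 2 <=
    (wt i j)%:R * `|u 0 i| ^+ 2 + (wt j i)%:R * `|u 0 j| ^+ 2.
  by move=> _; apply: pair_wt_ineq => iS jS; rewrite !(Wconst_eq uW) ?inE.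
have := energy_lt_weighted (wt := fun i j : 'I_n => wt i j) Gadj_sym pair
  (fun i => wdeg_lt i) u_neq0.
rewrite -(hform_laplacian Gadj_sym Gadj_irr).
rewrite (_ : 2 * _ * _ = K%:R * (2 * ((K + 2)%:R * sqnorm u))); last by rewrite natrM; ring.
by rewrite !ltr_pM2l ?ltr0n //; lia.
Qed.

Lemma card_spectral_diag_Glap_ge :
  #|[set i | (K + 2)%:R <= spectral_diag (Glap n d t a) 0 i]| = K.
Proof.
apply: (card_eig_ge_eq Glap_herm (W1 := Wzsum) (W2 := Wconst)).
- exact: realn.
- exact: hform_Wzsum_ge.
- exact: hform_Wconst_lt.
- exact: rank_Wzsum.
- by have := rank_Wconst; lia.
Qed.

End GraphG.

Unset Implicit Arguments.

Theorem lemma2p7 (n d t a : nat) :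
  3 <= d -> d <= n - 2 -> 2 <= t -> t <= d - 1 -> 1 <= a -> a <= n - d - 2 ->
  exists s : seq algC,
    is_spectrum (Glap n d t a) s /\
    count_in (n - d + 2)%:R%R n%:R%R s = n - d.
Proof.
move=> d_ge3 d_le t_ge2 t_le a_ge1 a_le.
exists [seq spectral_diag (Glap n d t a) 0%R i | i <- index_enum 'I_n]; split.
  by rewrite /is_spectrum big_map; exact: char_poly_hermsymmx (Glap_herm n d t a).
rewrite count_in_spectral; last exact: spectral_diag_Glap_le.
exact: card_spectral_diag_Glap_ge.
Qed.
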